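(* Let $\mathsf C$ be a 2-category with a Lawvere weight $\mathrm W$ and let $\Delta:\mathsf C\to\mathsf{Cat}$ be a 2-functor. Then for all $X,Y\in\mathrm{Im}(\Delta)$, the 2-functor interleaving distance satisfies $d_{\Delta,\mathrm W}(X,Y)=d_{\mathsf C^\Delta,\mathrm W^\Delta}(X,Y)$.
   Context: Composition of 1-morphisms is written $gf=g\circ f$. A Lawvere weight is $\mathrm W$ on 1-morphisms of $\mathsf C$ with values in $\mathbb R\cup\{\infty\}$, $\mathrm W\ge0$, $\mathrm W(1_A)=0$, $\mathrm W(gf)\le\mathrm W(g)+\mathrm W(f)$. $\mathrm{Im}(\Delta)=\bigcup_{A\in\mathsf C_0}\Delta(A)_0$. 2-functor interleaving: $X\in\Delta(A)_0$, $Y\in\Delta(B)_0$ are $(g,h)$-interleaved ($g:B\to A$, $h:A\to B$) if there exist $\phi:X\to\Delta_g(Y)$ in $\Delta(A)$, $\psi:Y\to\Delta_h(X)$ in $\Delta(B)$ and 2-morphisms $\alpha:1_A\Rightarrow gh$, $\beta:1_B\Rightarrow hg$ with $\Delta_g(\psi)\circ\phi=\Delta(\alpha)_X$, $\Delta_h(\phi)\circ\psi=\Delta(\beta)_Y$; $d_{\Delta,\mathrm W}(X,Y)=\inf\max\{\mathrm W(g),\mathrm W(h)\}$ over such. The structure $(\mathsf C^\Delta,\mathrm W^\Delta)$: objects are the elements of $\mathrm{Im}(\Delta)$; a 1-morphism $X\to Y$ (with $X\in\Delta(A)_0,Y\in\Delta(B)_0$) is a pair $(g,\phi)$ with $g\in\mathsf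 C_1(B,A)$ and $\phi:X\to\Delta_g(Y)$ in $\Delta(A)$; composition $(h,\psi)\circ(g,\phi)=(gh,\Delta_g(\psi)\circ\phi)$, identity $(1_A,1_X)$. 2-morphisms: between $(1_A,1_X)$ and $(h,\psi):X\to X$ there is a single 2-morphism $\widehat\psi$ if there exists a 2-morphism $\alpha:1_A\Rightarrow h$ in $\mathsf C$ with $\Delta(\alpha)_X=\psi$; each 1-morphism $(g,\phi)$ has an identity 2-morphism $1_{g,\phi}$ (equal to $\widehat{1_X}$ when $(g,\phi)=(1_A,1_X)$); there are no other 2-morphisms. $\mathrm W^\Delta_1((g,\phi))=\mathrm W(g)$ and $\mathrm W^\Delta_2\equiv0$. Its interleaving distance: $d_{\mathsf C^\Delta,\mathrm W^\Delta}(X,Y)=\inf\max\{\mathrm W^\Delta_1(u),\mathrm W^\Delta_1(v),\mathrm W^\Delta_2(a),\mathrm W^\Delta_2(b)\}$ over 1-morphisms $u:X\to Y$, $v:Y\to X$ and 2-morphisms $a:1_X\Rightarrow v\circ u$, $b:1_Y\Rightarrow u\circ v$ of this structure. Infima of empty sets are $\infty$. *)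

From HB Require Import structures.
From mathcomp Require Import all_boot all_order all_algebra.
From mathcomp Require Import classical_sets reals ereal.

Set Implicit Arguments.
Unset Strict Implicit.
Unset Printing Implicit Defensive.

Import Order.TTheory GRing.Theory Num.Theory.

Definition castH {O : Type} (H : O -> O -> Type) {x x' y y' : O}
  (e1 : x = x') (e2 : y = y') (m : H x y) : H x' y' :=
  match e1 in _ = a return H a y' with
  | erefl => match e2 in _ = b return H x b with erefl => m end
  end.
Arguments castH {O} H {x x' y y'} e1 e2 m.

Record TwoCat := {
  Ob : Type;
  Hom1 : Ob -> Ob -> Type;
  id1 : forall A, Hom1 A A;
  comp1 : forall A B C, Hom1 B C -> Hom1 A B -> Hom1 A C;
  comp1_assoc : forall A B C D (f : Hom1 A B) (g : Hom1 B C) (h : Hom1 C D),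
      comp1 h (comp1 g f) = comp1 (comp1 h g) f;
  comp1_id_l : forall A B (f : Hom1 A B), comp1 (id1 B) f = f;
  comp1_id_r : forall A B (f : Hom1 A B), comp1 f (id1 A) = f;
  Hom2 : forall A B, Hom1 A B -> Hom1 A B -> Type;
  id2 : forall A B (f : Hom1 A B), Hom2 f f;
  vcomp : forall A B (f g h : Hom1 A B), Hom2 g h -> Hom2 f g -> Hom2 f h;
  vcomp_assoc : forall A B (f g h k : Hom1 A B)
      (a : Hom2 f g) (b : Hom2 g h) (c : Hom2 h k),
      vcomp c (vcomp b a) = vcomp (vcomp c b) a;
  vcomp_id_l : forall A B (f g : Hom1 A B) (a : Hom2 f g), vcomp (id2 g) a = a;
  vcomp_id_r : forall A B (f g : Hom1 A B) (a : Hom2 f g), vcomp a (id2 f) = a;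
  hcomp : forall A B C (f f' : Hom1 A B) (g g' : Hom1 B C),
      Hom2 g g' -> Hom2 f f' -> Hom2 (comp1 g f) (comp1 g' f');
  hcomp_id : forall A B C (f : Hom1 A B) (g : Hom1 B C),
      hcomp (id2 g) (id2 f) = id2 (comp1 g f);
  interchange : forall A B C (f f' f'' : Hom1 A B) (g g' g'' : Hom1 B C)
      (a : Hom2 f f') (a' : Hom2 f' f'') (b : Hom2 g g') (b' : Hom2 g' g''),
      hcomp (vcomp b' b) (vcomp a' a) = vcomp (hcomp b' a') (hcomp b a);
  hcomp_assoc : forall A B C D (f f' : Hom1 A B) (g g' : Hom1 B C)
      (h h' : Hom1 C D) (a : Hom2 f f') (b : Hom2 g g') (c : Hom2 h h'),
      castH (@Hom2 A D) (comp1_assoc f g h) (comp1_assoc f' g' h')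
            (hcomp c (hcomp b a)) = hcomp (hcomp c b) a;
  hcomp_id_l : forall A B (f f' : Hom1 A B) (a : Hom2 f f'),
      castH (@Hom2 A B) (comp1_id_l f) (comp1_id_l f') (hcomp (id2 (id1 B)) a) = a;
  hcomp_id_r : forall A B (f f' : Hom1 A B) (a : Hom2 f f'),
      castH (@Hom2 A B) (comp1_id_r f) (comp1_id_r f') (hcomp a (id2 (id1 A))) = a
}.

Arguments id1 {_} _.
Arguments comp1 {_ _ _ _}.
Arguments Hom1 {_}.
Arguments Hom2 {_ _ _}.
Arguments id2 {_ _ _}.
Arguments vcomp {_ _ _ _ _ _}.
Arguments hcomp {_ _ _ _ _ _ _ _}.

Record Category := {
  cOb : Type;
  cHom : cOb -> cOb -> Type;
  cid : forall X, cHom X X;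
  ccomp : forall X Y Z, cHom Y Z -> cHom X Y -> cHom X Z;
  ccomp_assoc : forall X Y Z T (f : cHom X Y) (g : cHom Y Z) (h : cHom Z T),
      ccomp h (ccomp g f) = ccomp (ccomp h g) f;
  ccomp_id_l : forall X Y (f : cHom X Y), ccomp (cid Y) f = f;
  ccomp_id_r : forall X Y (f : cHom X Y), ccomp f (cid X) = f
}.

Arguments cHom {_}.
Arguments cid {_}.
Arguments ccomp {_ _ _ _}.

(* For g : A -> B in C, Δ_g : Δ(A) -> Δ(B)
   is a functor (Dobj g, Dmap g); for a 2-morphism a : f => f', Δ(a) is a
   natural transformation Δ_f => Δ_f' with components D2 a X.           *)
Record TwoFunctor (C : TwoCat) := {
  Dcat : Ob C -> Category;
  Dobj : forall A B (g : Hom1 A B), cOb (Dcat A) -> cOb (Dcat B);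
  Dmap : forall A B (g : Hom1 A B) (X Y : cOb (Dcat A)),
      cHom X Y -> cHom (Dobj g X) (Dobj g Y);
  Dmap_cid : forall A B (g : Hom1 A B) X, Dmap g (cid X) = cid (Dobj g X);
  Dmap_ccomp : forall A B (g : Hom1 A B) (X Y Z : cOb (Dcat A))
      (m : cHom X Y) (n : cHom Y Z),
      Dmap g (ccomp n m) = ccomp (Dmap g n) (Dmap g m);
  Dobj_id1 : forall A (X : cOb (Dcat A)), Dobj (id1 A) X = X;
  Dobj_comp1 : forall A B C0 (f : Hom1 A B) (g : Hom1 B C0) X,
      Dobj (comp1 g f) X = Dobj g (Dobj f X);
  Dmap_id1 : forall A (X Y : cOb (Dcat A)) (m : cHom X Y),
      castH (@cHom (Dcat A)) (Dobj_id1 X) (Dobj_id1 Y) (Dmap (id1 A) m) = m;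
  Dmap_comp1 : forall A B C0 (f : Hom1 A B) (g : Hom1 B C0) X Y (m : cHom X Y),
      castH (@cHom (Dcat C0)) (Dobj_comp1 f g X) (Dobj_comp1 f g Y)
            (Dmap (comp1 g f) m) = Dmap g (Dmap f m);
  D2 : forall A B (f f' : Hom1 A B) (a : Hom2 f f') (X : cOb (Dcat A)),
      cHom (Dobj f X) (Dobj f' X);
  D2_natural : forall A B (f f' : Hom1 A B) (a : Hom2 f f') X Y (m : cHom X Y),
      ccomp (D2 a Y) (Dmap f m) = ccomp (Dmap f' m) (D2 a X);
  D2_id2 : forall A B (f : Hom1 A B) X, D2 (id2 f) X = cid (Dobj f X);
  D2_vcomp : forall A B (f g h : Hom1 A B) (a : Hom2 f g) (b : Hom2 g h) X,
      D2 (vcomp b a) X = ccomp (D2 b X) (D2 a X);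
  D2_hcomp : forall A B C0 (f f' : Hom1 A B) (g g' : Hom1 B C0)
      (a : Hom2 f f') (b : Hom2 g g') X,
      castH (@cHom (Dcat C0)) (Dobj_comp1 f g X) (Dobj_comp1 f' g' X)
            (D2 (hcomp b a) X) = ccomp (D2 b (Dobj f' X)) (Dmap g (D2 a X))
}.

Arguments Dcat {_}.
Arguments Dobj {_} _ {_ _}.
Arguments Dmap {_} _ {_ _} _ {_ _}.
Arguments Dobj_id1 {_} _ {_}.
Arguments Dobj_comp1 {_} _ {_ _ _}.
Arguments D2 {_} _ {_ _ _ _}.

Record LawvereWeight (R : realType) (C : TwoCat) := {
  W :> forall A B, @Hom1 C A B -> \bar R;
  W_ge0 : forall A B (f : Hom1 A B), (0 <= W f)%E;
  W_id1 : forall A, W (id1 A) = 0%E;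
  W_comp1 : forall A B C0 (f : Hom1 A B) (g : Hom1 B C0),
      (W (comp1 g f) <= W g + W f)%E
}.

Arguments W {_ _} _ {_ _}.

Section Distances.
Variables (R : realType) (C : TwoCat) (Wt : LawvereWeight R C)
          (Δ : TwoFunctor C).

(* Δ(α)_X for α : 1_A => k, viewed as a morphism X -> Δ_k(X) *)
Definition D2u A (k : Hom1 A A) (a : Hom2 (id1 A) k) (X : cOb (Dcat Δ A))
  : cHom X (Dobj Δ k X) :=
  castH (@cHom (Dcat Δ A)) (Dobj_id1 Δ X) erefl (D2 Δ a X).

Definition D2uu A B (g : Hom1 B A) (h : Hom1 A B)
  (a : Hom2 (id1 A) (comp1 g h)) (X : cOb (Dcat Δ A))
  : cHom X (Dobj Δ g (Dobj Δ h X)) :=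
  castH (@cHom (Dcat Δ A)) erefl (Dobj_comp1 Δ h g X) (D2u a X).

Definition interleaved A B (X : cOb (Dcat Δ A)) (Y : cOb (Dcat Δ B))
  (g : Hom1 B A) (h : Hom1 A B) : Prop :=
  exists (phi : cHom X (Dobj Δ g Y)) (psi : cHom Y (Dobj Δ h X))
         (a : Hom2 (id1 A) (comp1 g h)) (b : Hom2 (id1 B) (comp1 h g)),
    ccomp (Dmap Δ g psi) phi = D2uu a X /\
    ccomp (Dmap Δ h phi) psi = D2uu b Y.

Definition dDelta A B (X : cOb (Dcat Δ A)) (Y : cOb (Dcat Δ B)) : \bar R :=
  ereal_inf [set r | exists (g : Hom1 B A) (h : Hom1 A B),
                       interleaved X Y g h /\ r = maxe (W Wt g) (W Wt h)].

(* objects: elements of Im(Δ), i.e. pairs (A, X) with X ∈ Δ(A)_0 *)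
Definition ObD := {A : Ob C & cOb (Dcat Δ A)}.

Record MorD (X Y : ObD) := {
  mg : Hom1 (projT1 Y) (projT1 X);
  mphi : cHom (projT2 X) (Dobj Δ mg (projT2 Y))
}.

Definition idD (X : ObD) : MorD X X :=
  {| mg := id1 (projT1 X);
     mphi := castH (@cHom (Dcat Δ (projT1 X))) erefl
               (esym (Dobj_id1 Δ (projT2 X))) (cid (projT2 X)) |}.

Definition compD (X Y Z : ObD) (v : MorD Y Z) (u : MorD X Y) : MorD X Z :=
  {| mg := comp1 (mg u) (mg v);
     mphi := castH (@cHom (Dcat Δ (projT1 X))) erefl
               (esym (Dobj_comp1 Δ (mg v) (mg u) (projT2 Z)))
               (ccomp (Dmap Δ (mg u) (mphi v)) (mphi u)) |}.

(* 2-morphisms of C^Δ: the 2-morphisms \hat ψ : (1_A,1_X) => (h,ψ) (present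
   iff some α : 1_A => h has Δ(α)_X = ψ) and the identity 2-morphisms. *)
Inductive TwoMorD : forall X Y : ObD, MorD X Y -> MorD X Y -> Type :=
| hatD : forall (X : ObD) (u : MorD X X),
    (exists a : Hom2 (id1 (projT1 X)) (mg u), D2u a (projT2 X) = mphi u) ->
    TwoMorD (idD X) u
| idTwoD : forall (X Y : ObD) (u : MorD X Y), TwoMorD u u.

Definition WD1 (X Y : ObD) (u : MorD X Y) : \bar R := W Wt (mg u).
Definition WD2 (X Y : ObD) (u u' : MorD X Y) (a : TwoMorD u u') : \bar R := 0%E.

Definition dCD (X Y : ObD) : \bar R :=
  ereal_inf [set r | exists (u : MorD X Y) (v : MorD Y X)
                       (a : TwoMorD (idD X) (compD v u))
                       (b : TwoMorD (idD Y) (compD u v)),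
               r = maxe (WD1 u) (maxe (WD1 v) (maxe (WD2 a) (WD2 b)))].

End Distances.

From HB Require Import structures.
From mathcomp Require Import all_boot all_order all_algebra.
From mathcomp Require Import classical_sets reals ereal.
From Stdlib Require Import Program.Equality.

Set Implicit Arguments.
Unset Strict Implicit.
Unset Printing Implicit Defensive.
Import Order.TTheory GRing.Theory Num.Theory.

(* A 2-morphism (1_A, 1_X) => (g h, Delta_g(psi) o phi) of C^Delta exists
   exactly when Delta_g(psi) o phi = Delta(alpha)_X for some alpha : 1_A => g h,
   which is one of the two interleaving equations.  So pairs of 1-morphisms of
   C^Delta admitting the two 2-morphisms are exactly the interleavings, and since
   W^Delta_2 vanishes both infima range over the same values max(W g, W h). *)

Lemma castH_codK {O : Type} (H : O -> O -> Type) (x a b : O) (e : a = b)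
    (m : H x a) :
  castH H erefl (esym e) (castH H erefl e m) = m.
Proof. by case: _ / e in m *. Qed.

Lemma castH_codVK {O : Type} (H : O -> O -> Type) (x a b : O) (e : a = b)
    (m : H x b) :
  castH H erefl e (castH H erefl (esym e) m) = m.
Proof. by case: _ / e in m *. Qed.

Section TwoMorphismsOfCDelta.
Variables (C : TwoCat) (Δ : TwoFunctor C).

Definition hat_cond (X : ObD Δ) (u : MorD X X) : Prop :=
  exists a : Hom2 (id1 (projT1 X)) (mg u), D2u a (projT2 X) = mphi u.

Lemma hat_cond_idD (X : ObD Δ) : hat_cond (idD X).
Proof.
exists (id2 (id1 (projT1 X))); rewrite /D2u /idD /= D2_id2.
case: X => A X /=; move: (Dobj_id1 Δ X).
by move: (Dobj Δ (id1 A) X) => Z e; case: _ / e.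
Qed.

Lemma TwoMorD_hat_cond (X : ObD Δ) (u : MorD X X) :
  TwoMorD (idD X) u -> hat_cond u.
Proof. by move=> t; dependent destruction t; [|exact: hat_cond_idD]. Qed.

Lemma hat_cond_compD (X Y : ObD Δ) (u : MorD X Y) (v : MorD Y X) :
  hat_cond (compD v u) <->
  exists a : Hom2 (id1 (projT1 X)) (comp1 (mg u) (mg v)),
    ccomp (Dmap Δ (mg u) (mphi v)) (mphi u) = D2uu a (projT2 X).
Proof.
split=> -[a Ha]; exists a.
- by rewrite /D2uu Ha castH_codVK.
- by rewrite /= Ha /D2uu; apply/esym; exact: castH_codK.
Qed.

End TwoMorphismsOfCDelta.

Lemma maxe_absorb00 (R : realType) (x y : \bar R) : (0 <= y)%E ->
  maxe x (maxe y (maxe 0%E 0%E)) = maxe x y.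
Proof. by move=> y_ge0; rewrite maxxx (max_l y_ge0). Qed.

Theorem lemma5p17 (R : realType) (C : TwoCat) (Wt : LawvereWeight R C)
  (Δ : TwoFunctor C) (A B : Ob C) (X : cOb (Dcat Δ A)) (Y : cOb (Dcat Δ B)) :
  dDelta Wt X Y = dCD Wt (existT _ A X) (existT _ B Y).
Proof.
rewrite /dDelta /dCD; congr ereal_inf; apply/seteqP; split => r /=.
- move=> [g [h [[phi [psi [a [b [E1 E2]]]]] ->]]].
  pose u := @Build_MorD C Δ (existT _ A X) (existT _ B Y) g phi.
  pose v := @Build_MorD C Δ (existT _ B Y) (existT _ A X) h psi.
  have hat_vu : hat_cond (compD v u) by apply/hat_cond_compD; exists a.
  have hat_uv : hat_cond (compD u v) by apply/hat_cond_compD; exists b.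
  exists u, v, (hatD hat_vu), (hatD hat_uv).
  by rewrite /WD1 /WD2 /= maxe_absorb00 // W_ge0.
- move=> [[g phi] [[h psi] [a [b ->]]]].
  have [al E1] := (hat_cond_compD _ _).1 (TwoMorD_hat_cond a).
  have [be E2] := (hat_cond_compD _ _).1 (TwoMorD_hat_cond b).
  exists g, h; split; first by exists phi, psi, al, be.
  by rewrite /WD1 /WD2 /= maxe_absorb00 // W_ge0.
Qed.
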